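(* Let $R=k[x_1,\dots,x_n]$ with the standard grading, let $G$ be a group acting on $R$ by permuting the variables, and let $I\subset R$ be a homogeneous ideal. Let $\preceq$ be a monomial order. If $G$ acts monomially on $I$ up to degree $d$ and $\mathrm{in}_{\preceq}(I)$ is generated in degrees $\le d$, then $g(\mathrm{in}_{\preceq}(I))=\mathrm{in}_{\preceq_{g^{-1}}}(I)$ for every $g\in G$.
   Context: For $h\in R$, $\mathrm{mon}(h)$ is the set of monomials appearing in $h$ with nonzero coefficient. $G$ acts monomially on $I$ up to degree $d$ if for every $h\in I$ of degree $\le d$ and every $g\in G$ there is $h'\in I$ with $\mathrm{mon}(h')=\mathrm{mon}(g(h))$. For a monomial order $\preceq$ and $g\in G$, $\preceq_g$ is the monomial order defined by $a\preceq_g b\iff g(a)\preceq g(b)$. *)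

From HB Require Import structures.
From mathcomp Require Import all_boot all_order all_algebra all_fingroup.
From mathcomp Require Import mpoly.
Set Implicit Arguments. Unset Strict Implicit. Unset Printing Implicit Defensive.
Import GRing.Theory.
Local Open Scope ring_scope.

Section Defs.
Context (n : nat) (k : fieldType).
Local Notation P := {mpoly k[n]}.

Definition is_ideal (I : P -> Prop) : Prop :=
  [/\ I 0, (forall f g, I f -> I g -> I (f + g)) & (forall f h, I f -> I (h * f))].

Definition ideal_gen (S : P -> Prop) (f : P) : Prop :=
  forall J, is_ideal J -> (forall s, S s -> J s) -> J f.

Definition hcomp (e : nat) (f : P) : P :=
  \sum_(m <- msupp f | mdeg m == e) f@_m *: 'X_[m].

Definition homogeneous_ideal (I : P -> Prop) : Prop :=
  is_ideal I /\ forall f e, I f -> I (hcomp e f).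

Definition deg_le (f : P) (d : nat) : Prop :=
  forall m, m \in msupp f -> (mdeg m <= d)%N.

Definition monomial_order (le : rel 'X_{1..n}) : Prop :=
  [/\ reflexive le, antisymmetric le, transitive le & total le] /\
  (forall a b c, le a b -> le (a + c)%MM (b + c)%MM) /\
  (forall a, le 0%MM a).

(* Action of a permutation g of the variables: g(x_i) = x_{g i}. *)
Definition var_perm_act (g : 'S_n) (f : P) : P := msym g f.

(* Induced action on monomials: g('X_[m]) = 'X_[mon_act g m]. *)
Definition mon_act (g : 'S_n) (m : 'X_{1..n}) : 'X_{1..n} :=
  [multinom m (invg g i) | i < n].

Definition order_twist (le : rel 'X_{1..n}) (g : 'S_n) : rel 'X_{1..n} :=
  fun a b => le (mon_act g a) (mon_act g b).

Definition is_lead (le : rel 'X_{1..n}) (f : P) (m : 'X_{1..n}) : Prop :=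
  m \in msupp f /\ forall m', m' \in msupp f -> le m' m.

Definition initial_ideal (le : rel 'X_{1..n}) (I : P -> Prop) : P -> Prop :=
  ideal_gen (fun s => exists f m, [/\ I f, f != 0, is_lead le f m & s = 'X_[m]]).

Definition acts_monomially_upto (G : {set 'S_n}) (I : P -> Prop) (d : nat) : Prop :=
  forall h g, I h -> deg_le h d -> g \in G ->
    exists h', I h' /\ msupp h' =i msupp (var_perm_act g h).

Definition generated_in_degrees_le (J : P -> Prop) (d : nat) : Prop :=
  forall f, J f <-> ideal_gen (fun s => J s /\ deg_le s d) f.

End Defs.

(* Write <=' for the twisted order <=_(g^-1).  Since in_<=(I) is generated
   in degrees <= d, it suffices to move monomials divisible by a leading monomial
   m of degree <= d.  Such an m leads a homogeneous f in I of degree <= d, and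
   the element of I with the monomials of g(f) has <='-leading monomial g(m);
   hence g(in_<=(I)) is contained in in_<='(I).  Conversely, for every monomial order
   the standard monomials of degree e are linearly independent modulo I and
   span R_e modulo I, so the exchange lemma shows that their number does not
   depend on the order.  By the first inclusion g^-1 maps the <='-standard
   monomials of degree e injectively into the <=-standard ones, hence onto
   them, which is the reverse inclusion. *)

From HB Require Import structures.
From mathcomp Require Import all_boot all_order all_algebra all_fingroup.
From mathcomp Require Import mpoly.
From Stdlib Require Import ClassicalEpsilon.
Set Implicit Arguments. Unset Strict Implicit. Unset Printing Implicit Defensive.
Import GRing.Theory.
Local Open Scope ring_scope.

Section Exchange.
Variables (k : fieldType) (V : lmodType k) (S : V -> Prop).
Hypotheses (S0 : S 0) (SD : forall u v, S u -> S v -> S (u + v))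
  (SZ : forall c v, S v -> S (c *: v)).

Lemma exchange_leq p q (x : 'I_p -> V) (y : 'I_q -> V) :
  (forall lam : 'rV[k]_p, S (\sum_i lam 0 i *: x i) -> lam = 0) ->
  (forall i, exists c : 'I_q -> k, S (x i - \sum_j c j *: y j)) ->
  (p <= q)%N.
Proof.
move=> x_indep /fin_all_exists [c x_span]; rewrite leqNgt; apply/negP => q_lt_p.
pose M : 'M[k]_(p, q) := \matrix_(i, j) c i j.
have /rowV0Pn [lam /sub_kermxP lamM0] : kermx M != 0.
  rewrite -mxrank_eq0 mxrank_ker subn_eq0 -ltnNge.
  exact: leq_ltn_trans (rank_leq_col M) q_lt_p.
apply/negP; rewrite negbK; apply/eqP/x_indep.
have lam_y0 : \sum_i lam 0 i *: \sum_j c i j *: y j = 0.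
  under eq_bigr do rewrite scaler_sumr.
  rewrite exchange_big big1 //= => j _.
  under eq_bigr do rewrite scalerA.
  rewrite -scaler_suml; suff -> : \sum_i lam 0 i * c i j = 0 by rewrite scale0r.
  have := congr1 (fun A : 'rV_q => A 0 j) lamM0; rewrite !mxE => lamMj.
  by rewrite -[RHS]lamMj; apply: eq_bigr => i _; rewrite mxE.
have : S (\sum_i lam 0 i *: (x i - \sum_j c i j *: y j)).
  by apply: big_ind => // i _; apply: SZ.
by under eq_bigr do rewrite scalerBr; rewrite sumrB lam_y0 subr0.
Qed.

End Exchange.

Definition asbool (Q : Prop) : bool :=
  if excluded_middle_informative Q then true else false.

Lemma asboolP (Q : Prop) : reflect Q (asbool Q).
Proof. by rewrite /asbool; case: excluded_middle_informative => ?; constructor. Qed.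

Section Polynomials.
Variables (n : nat) (k : fieldType).
Local Notation P := {mpoly k[n]}.
Implicit Types (a b m u v : 'X_{1..n}) (f h p : P) (g : 'S_n) (le : rel 'X_{1..n}).

Section IdealClosure.
Variables (J : P -> Prop) (hJ : is_ideal J).

Lemma ideal0 : J 0. Proof. by case: hJ. Qed.
Lemma idealD f h : J f -> J h -> J (f + h). Proof. by case: hJ => _ + _; apply. Qed.
Lemma idealMl h f : J f -> J (h * f). Proof. by case: hJ => _ _; apply. Qed.
Lemma idealZ c f : J f -> J (c *: f). Proof. by rewrite -mul_mpolyC; apply: idealMl. Qed.

Lemma ideal_sum (T : Type) (r : seq T) (Q : pred T) (F : T -> P) :
  (forall i, Q i -> J (F i)) -> J (\sum_(i <- r | Q i) F i).
Proof. by move=> JF; apply: big_ind => //; [apply: ideal0 | apply: idealD]. Qed.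

Lemma ideal_monomials f : (forall m, m \in msupp f -> J 'X_[m]) -> J f.
Proof.
by move=> JX; rewrite (mpolyE f) big_seq; apply: ideal_sum => m /JX; apply: idealZ.
Qed.

End IdealClosure.

Lemma mcoeff_sumX_inj (T : finType) (x : T -> 'X_{1..n}) (c : T -> k) i :
  injective x -> (\sum_j c j *: 'X_[x j] : P)@_(x i) = c i.
Proof.
move=> x_inj; rewrite raddf_sum (bigD1 i) //= mcoeffZ mcoeffX eqxx mulr1 big1 ?addr0 //.
by move=> j j_neq; rewrite mcoeffZ mcoeffX (inj_eq x_inj) (negbTE j_neq) mulr0.
Qed.

Lemma msupp_sumX (T : finType) (x : T -> 'X_{1..n}) (c : T -> k) m :
  m \in msupp (\sum_j c j *: 'X_[x j] : P) -> exists j, m = x j.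
Proof.
case: (pickP (fun j => x j == m)) => [j /eqP <-|x_neq]; first by exists j.
rewrite mcoeff_msupp raddf_sum big1 ?eqxx // => j _ /=.
by rewrite mcoeffZ mcoeffX x_neq mulr0.
Qed.

Lemma mpoly_expand_inj (T : finType) (y : T -> 'X_{1..n}) (r : P) : injective y ->
  (forall m, m \in msupp r -> exists j, m = y j) -> r = \sum_j r@_(y j) *: 'X_[y j].
Proof.
move=> y_inj r_y; apply/mpolyP => m.
case: (pickP (fun j => y j == m)) => [j /eqP <-|y_neq]; first by rewrite mcoeff_sumX_inj.
have y_Nm j : m <> y j by move=> m_eq; move: (y_neq j); rewrite m_eq eqxx.
rewrite memN_msupp_eq0; last by apply/negP => /r_y [j /y_Nm].
by rewrite memN_msupp_eq0 //; apply/negP => /msupp_sumX [j /y_Nm].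
Qed.

Lemma ideal_gen_ideal (S : P -> Prop) : is_ideal (ideal_gen S).
Proof.
split=> [J hJ _ | f h Sf Sh J hJ JS | f h Sf J hJ JS]; first exact: ideal0.
  by apply: idealD; [|apply: Sf|apply: Sh].
by apply: idealMl; [|apply: Sf].
Qed.

Lemma ideal_gen_mem (S : P -> Prop) s : S s -> ideal_gen S s.
Proof. by move=> Ss J _; apply. Qed.

Lemma ideal_gen_act (S J : P -> Prop) g : is_ideal J ->
  (forall s, S s -> J (var_perm_act g s)) ->
  forall f, ideal_gen S f -> J (var_perm_act g f).
Proof.
move=> hJ JS f /(_ (fun p => J (var_perm_act g p))); apply=> //.
rewrite /var_perm_act; split=> [|f1 f2|f1 h]; first by rewrite msym0; apply: ideal0.
  by rewrite msymD; apply: idealD.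
by rewrite msymM; apply: idealMl.
Qed.

Lemma mon_actD g a b : mon_act g (a + b)%MM = (mon_act g a + mon_act g b)%MM.
Proof. by apply/mnmP => i; rewrite !mnmE. Qed.

Lemma mon_act0 g : mon_act g 0%MM = 0%MM.
Proof. by apply/mnmP => i; rewrite !mnmE. Qed.

Lemma mon_actK g : cancel (mon_act g) (mon_act g^-1).
Proof. exact: mpermKV. Qed.

Lemma mon_actVK g : cancel (mon_act g^-1) (mon_act g).
Proof. by move=> m; have := mon_actK g^-1 m; rewrite invgK. Qed.

Lemma mon_act_inj g : injective (mon_act g).
Proof. exact: can_inj (mon_actK g). Qed.

Lemma mdeg_mon_act g m : mdeg (mon_act g m) = mdeg m.
Proof. exact: mdeg_mperm. Qed.

Lemma var_perm_actX g m : var_perm_act g 'X_[m] = 'X_[mon_act g m] :> P.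
Proof. exact: msymX. Qed.

Lemma msupp_var_perm_act g f m :
  (m \in msupp (var_perm_act g f)) = (mon_act g^-1 m \in msupp f).
Proof. by rewrite !mcoeff_msupp mcoeff_sym /mon_act invgK. Qed.

Lemma var_perm_actVK g : cancel (var_perm_act g^-1) (var_perm_act g : P -> P).
Proof. by move=> f; rewrite /var_perm_act -msymMm mulVg msym1m. Qed.

Lemma monomial_order_twist le g :
  monomial_order le -> monomial_order (order_twist le g).
Proof.
case=> [[refl anti trans total] [addr zero]]; split; [split|split].
- by move=> a; apply: refl.
- by move=> a b /anti /mon_act_inj.
- by move=> a b c; apply: trans.
- by move=> a b; apply: total.
- by move=> a b c; rewrite /order_twist !mon_actD; apply: addr.
- by move=> a; rewrite /order_twist mon_act0; apply: zero.
Qed.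

Section MonomialOrder.
Variables (le : rel 'X_{1..n}) (mo : monomial_order le).

Lemma monomial_order_refl : reflexive le. Proof. by case: mo => [[]]. Qed.
Lemma monomial_order_anti : antisymmetric le. Proof. by case: mo => [[]]. Qed.
Lemma monomial_order_trans : transitive le. Proof. by case: mo => [[]]. Qed.
Lemma monomial_order_total : total le. Proof. by case: mo => [[]]. Qed.
Lemma monomial_order_addr a b c : le a b -> le (a + c)%MM (b + c)%MM.
Proof. by case: mo => _ [+ _]; apply. Qed.

Lemma lead_exists f : f != 0 -> exists m, is_lead le f m.
Proof.
move=> f_neq0; pose ge a b := le b a.
have ge_trans : transitive ge by move=> a b c ba cb; apply: monomial_order_trans cb ba.
have ge_total : total ge by move=> a b; apply: monomial_order_total.
have := sort_sorted ge_total (msupp f); have := mem_sort ge (msupp f).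
case: (sort ge (msupp f)) => [|m s] mem_s.
  move=> _; move: f_neq0; rewrite -msupp_eq0.
  by case: (msupp f) mem_s => // m0 s0 /(_ m0); rewrite mem_head.
move=> /(order_path_min ge_trans) /allP m_max; exists m; split; first by rewrite -mem_s mem_head.
move=> m'; rewrite -mem_s inE => /predU1P [-> | /m_max //]; exact: monomial_order_refl.
Qed.

End MonomialOrder.

Definition lead_mon le (I : P -> Prop) m := exists f, I f /\ is_lead le f m.

Section LeadingMonomials.
Variables (le : rel 'X_{1..n}) (I : P -> Prop).

Lemma lead_mon_initial m : lead_mon le I m -> initial_ideal le I 'X_[m].
Proof.
case=> f [If lead_m]; apply: ideal_gen_mem; exists f, m; split=> //.
by apply: contraTneq lead_m.1 => ->; rewrite msupp0.
Qed.

Lemma initial_ideal_msupp p m : initial_ideal le I p -> m \in msupp p ->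
  exists2 m0, lead_mon le I m0 & (m0 <= m)%MM.
Proof.
pose J (q : P) := forall u, u \in msupp q -> exists2 m0, lead_mon le I m0 & (m0 <= u)%MM.
move=> /(_ J) Jp; apply: Jp; last first.
  move=> _ [f [m0 [If _ lead_m0 ->]]] u; rewrite msuppX mem_seq1 => /eqP ->.
  by exists m0; [exists f | apply: lepm_refl].
split=> [u|f h Jf Jh u /msuppD_le|f h Jf u /msuppM_le /allpairsP [[u1 u2] /= [_ /Jf]]].
- by rewrite msupp0.
- by rewrite mem_cat => /orP [/Jf|/Jh].
- by move=> [m0 L0 le_m0] ->; exists m0 => //; apply: lepm_trans le_m0 (lem_addl _ _).
Qed.

Hypotheses (mo : monomial_order le) (hI : is_ideal I).

Lemma lead_monD m c : lead_mon le I m -> lead_mon le I (m + c)%MM.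
Proof.
case=> f [If [f_m f_max]]; exists (f * 'X_[c]); split; first by rewrite mulrC; apply: idealMl.
split; first by rewrite mcoeff_msupp addmC mcoeffMX -mcoeff_msupp.
move=> m'; rewrite (perm_mem (msuppMX _ _)) => /mapP [m'' /f_max le_m'' ->].
by rewrite addmC; apply: monomial_order_addr.
Qed.

Lemma lead_mon_initialX m : initial_ideal le I 'X_[m] -> lead_mon le I m.
Proof.
move=> /initial_ideal_msupp; rewrite msuppX => /(_ m (mem_head _ _)) [m0 L0 le_m0].
by rewrite -(submK le_m0) addmC; apply: lead_monD.
Qed.

End LeadingMonomials.

Lemma mcoeff_hcomp e f m : (hcomp e f)@_m = if mdeg m == e then f@_m else 0.
Proof.
rewrite /hcomp raddf_sum /= big_mkcond /=.
have [f_m|f_Nm] := boolP (m \in msupp f).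
  rewrite (bigD1_seq m) //= mcoeffZ mcoeffX eqxx mulr1 big1 ?addr0; first by case: ifP.
  by move=> m' /negbTE m'_neq; case: ifP => // _; rewrite mcoeffZ mcoeffX m'_neq mulr0.
rewrite memN_msupp_eq0 // if_same big_seq big1 // => m' f_m'.
case: ifP => // _; rewrite mcoeffZ mcoeffX.
by case: eqP => [m'_eq|]; [rewrite -m'_eq f_m' in f_Nm | rewrite mulr0].
Qed.

Lemma msupp_hcomp e f m : (m \in msupp (hcomp e f)) = (mdeg m == e) && (m \in msupp f).
Proof. by rewrite !mcoeff_msupp mcoeff_hcomp; case: ifP; rewrite ?eqxx. Qed.

Lemma lead_mon_homogeneous le I m : homogeneous_ideal I -> lead_mon le I m ->
  exists f, [/\ I f, is_lead le f m & forall m', m' \in msupp f -> mdeg m' = mdeg m].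
Proof.
move=> [_ I_hcomp] [f [If [f_m f_max]]]; exists (hcomp (mdeg m) f); split.
- exact: I_hcomp.
- split=> [|m']; first by rewrite msupp_hcomp eqxx.
  by rewrite msupp_hcomp => /andP [_ /f_max].
- by move=> m'; rewrite msupp_hcomp => /andP [/eqP].
Qed.

Section StandardMonomials.
Variables (I : P -> Prop) (hom : homogeneous_ideal I).
Let hI : is_ideal I := hom.1.

Definition std_mon le e : {set 'X_{1..n < e.+1}} :=
  [set v : 'X_{1..n < e.+1} | (mdeg v == e) && ~~ asbool (lead_mon le I v)].

Lemma std_monP le e (v : 'X_{1..n < e.+1}) :
  reflect (mdeg v = e /\ ~ lead_mon le I v) (v \in std_mon le e).
Proof.
rewrite inE; apply: (iffP andP) => [] [/eqP deg_v NL_v]; split=> //.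
  by move=> L_v; case/negP: NL_v; apply/asboolP.
by apply/negP => /asboolP.
Qed.

Definition std_supported le e (r : P) :=
  forall m, m \in msupp r -> mdeg m = e /\ ~ lead_mon le I m.

Section FixedOrder.
Variables (le : rel 'X_{1..n}) (mo : monomial_order le).

Lemma lead_mon_reduce u : lead_mon le I u -> exists q, I ('X_[u] - q) /\
  forall m, m \in msupp q -> [/\ mdeg m = mdeg u, le m u & m != u].
Proof.
case/(lead_mon_homogeneous hom) => f [If [f_u f_max] f_deg].
have c_neq0 : f@_u != 0 by rewrite -mcoeff_msupp.
exists ('X_[u] - (f@_u)^-1 *: f); split.
  by rewrite opprB addrC subrK; apply: idealZ.
move=> m; rewrite mcoeff_msupp mcoeffB mcoeffZ mcoeffX.
have [<-|u_neq_m] := eqVneq u m; first by rewrite mulVf // subrr eqxx.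
rewrite sub0r oppr_eq0 mulf_eq0 invr_eq0 (negbTE c_neq0) /= -mcoeff_msupp => f_m.
by split; [exact: f_deg | exact: f_max |].
Qed.

Lemma card_lower_lt e v u : mdeg u = e -> le v u -> v != u ->
  (#|[set w : 'X_{1..n < e.+1} | le w v]| < #|[set w : 'X_{1..n < e.+1} | le w u]|)%N.
Proof.
move=> deg_u le_vu v_neq_u; apply/proper_card/properP; split.
  by apply/subsetP => w; rewrite !inE => /(monomial_order_trans mo); apply.
have deg_lt : (mdeg u < e.+1)%N by rewrite deg_u.
exists (BMultinom deg_lt); rewrite !inE /=; first exact: monomial_order_refl.
by apply: contra v_neq_u => le_uv; apply/eqP/(monomial_order_anti mo); rewrite le_vu.
Qed.

Lemma std_mon_span e u : mdeg u = e ->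
  exists r, I ('X_[u] - r) /\ std_supported le e r.
Proof.
pose reducible q := exists r, I (q - r) /\ std_supported le e r.
have red0 : reducible 0.
  by exists 0; rewrite subr0; split=> [|m]; [exact: ideal0 | rewrite msupp0].
have redD q1 q2 : reducible q1 -> reducible q2 -> reducible (q1 + q2).
  move=> [r1 [I1 S1]] [r2 [I2 S2]]; exists (r1 + r2); split.
    by rewrite opprD addrACA; apply: idealD.
  by move=> m /msuppD_le; rewrite mem_cat => /orP [/S1|/S2].
have redZ c q : reducible q -> reducible (c *: q).
  move=> [r [Ir Sr]]; exists (c *: r); split; first by rewrite -scalerBr; apply: idealZ.
  by move=> m /msuppZ_le /Sr.
(* There are finitely many monomials of degree e, so the number of those below
   u is a well-founded measure. *)
pose rank v := #|[set w : 'X_{1..n < e.+1} | le w v]|.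
move: {2}(rank u).+1 (ltnSn (rank u)) => N; elim: N u => // N IH u rank_u deg_u.
have [L_u|NL_u] := asboolP (lead_mon le I u); last first.
  exists 'X_[u]; rewrite subrr; split=> [|m]; first exact: ideal0.
  by rewrite msuppX mem_seq1 => /eqP ->.
have [q [Iq q_lower]] := lead_mon_reduce L_u.
suff [r [Ir Sr]] : reducible q.
  by exists r; split=> //; have := idealD hI Iq Ir; rewrite addrA subrK.
rewrite (mpolyE q) big_seq; apply: (big_ind reducible) => // m q_m.
have [deg_m le_mu m_neq_u] := q_lower m q_m.
apply/redZ/IH; last by rewrite deg_m.
by apply: leq_trans (card_lower_lt deg_u le_mu m_neq_u) _; rewrite -ltnS.
Qed.

Lemma std_mon_indep (T : finType) (x : T -> 'X_{1..n}) : injective x ->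
  (forall i, ~ lead_mon le I (x i)) ->
  forall lam : T -> k, I (\sum_i lam i *: 'X_[x i]) -> forall i, lam i = 0.
Proof.
move=> x_inj x_std lam I_lam i0; apply/eqP; apply: contraT => lam_i0.
have : \sum_i lam i *: 'X_[x i] != 0 :> P.
  by apply: contraNneq lam_i0 => f0; rewrite -(mcoeff_sumX_inj lam i0 x_inj) f0 mcoeff0.
case/(lead_exists mo) => m [f_m f_max]; have [j m_eq] := msupp_sumX f_m.
by case: (x_std j); exists (\sum_i lam i *: 'X_[x i]); rewrite -m_eq.
Qed.

End FixedOrder.

Lemma card_std_mon_le le le' e : monomial_order le -> monomial_order le' ->
  (#|std_mon le e| <= #|std_mon le' e|)%N.
Proof.
move=> mo mo'.
pose x (i : 'I_#|std_mon le e|) : 'X_{1..n} := enum_val i.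
pose y (j : 'I_#|std_mon le' e|) : 'X_{1..n} := enum_val j.
have x_inj : injective x by move=> i j /val_inj /enum_val_inj.
have y_inj : injective y by move=> i j /val_inj /enum_val_inj.
apply: (exchange_leq (ideal0 hI) (idealD hI) (idealZ hI)
  (x := fun i => 'X_[x i]) (y := fun j => 'X_[y j])).
  move=> lam I_lam; apply/rowP => i; rewrite mxE.
  apply: (std_mon_indep mo x_inj _ I_lam) => j.
  by have /std_monP [] := enum_valP j.
move=> i; have /std_monP [deg_x _] := enum_valP i.
have [r [Ir r_std]] := std_mon_span mo' deg_x.
exists (fun j => r@_(y j)); rewrite -mpoly_expand_inj // => m /r_std [deg_m NL_m].
have deg_lt : (mdeg m < e.+1)%N by rewrite deg_m.
have std_m : BMultinom deg_lt \in std_mon le' e by apply/std_monP.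
by exists (enum_rank_in std_m (BMultinom deg_lt)); rewrite /y enum_rankK_in.
Qed.

End StandardMonomials.

Section InitialIdealAction.
Variables (G : {group 'S_n}) (I : P -> Prop) (le : rel 'X_{1..n}) (d : nat).
Hypotheses (hom : homogeneous_ideal I) (mo : monomial_order le)
  (acts : acts_monomially_upto G I d)
  (gen : generated_in_degrees_le (initial_ideal le I) d).
Variables (g : 'S_n) (gG : g \in G).
Local Notation le' := (order_twist le g^-1).

Lemma lead_mon_act_deg_leq m : lead_mon le I m -> (mdeg m <= d)%N ->
  lead_mon le' I (mon_act g m).
Proof.
move=> L_m deg_m; have [f [If [f_m f_max] f_deg]] := lead_mon_homogeneous hom L_m.
have [|f' [If' f'_supp]] := acts If _ gG; first by move=> m' /f_deg ->.
exists f'; split=> //; split=> [|m']; first by rewrite f'_supp msupp_var_perm_act mon_actK.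
by rewrite f'_supp msupp_var_perm_act => /f_max; rewrite /order_twist mon_actK.
Qed.

Lemma initial_ideal_act f : initial_ideal le I f ->
  initial_ideal le' I (var_perm_act g f).
Proof.
move=> /(gen f).1; apply: ideal_gen_act; first exact: ideal_gen_ideal.
move=> s [in_s deg_s]; apply: ideal_monomials; first exact: ideal_gen_ideal.
move=> m; rewrite msupp_var_perm_act => s_m.
have [m0 L_m0 le_m0] := initial_ideal_msupp in_s s_m.
have deg_m0 : (mdeg m0 <= d)%N.
  by apply: leq_trans (deg_s _ s_m); rewrite -(submK le_m0) mdegD leq_addl.
rewrite -(mon_actVK g m) -(submK le_m0) addmC mon_actD; apply: lead_mon_initial.
apply: lead_monD; [exact: monomial_order_twist | exact: hom.1 | exact: lead_mon_act_deg_leq].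
Qed.

Lemma lead_mon_act m : lead_mon le I m -> lead_mon le' I (mon_act g m).
Proof.
move/lead_mon_initial/initial_ideal_act; rewrite var_perm_actX.
by apply: lead_mon_initialX; [exact: monomial_order_twist | exact: hom.1].
Qed.

Lemma lead_mon_actV u : lead_mon le' I u -> lead_mon le I (mon_act g^-1 u).
Proof.
move=> L_u; set e := mdeg u.
have act_deg (v : 'X_{1..n < e.+1}) : (mdeg (mon_act g v) < e.+1)%N.
  by rewrite mdeg_mon_act bmdeg.
pose act (v : 'X_{1..n < e.+1}) := BMultinom (act_deg v).
have act_inj : injective act by move=> v w /(congr1 val) /mon_act_inj /val_inj.
have std_act : act @^-1: std_mon I le' e = std_mon I le e.
  apply/eqP; rewrite eqEcard card_preimset // card_std_mon_le ?andbT //; last first.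
    exact: monomial_order_twist.
  apply/subsetP => v; rewrite inE => /std_monP [deg_v NL_v].
  rewrite /= mdeg_mon_act in deg_v; apply/std_monP; split=> // L_v.
  by apply: NL_v; apply: lead_mon_act.
have [//|NL] := asboolP (lead_mon le I (mon_act g^-1 u)).
have deg_lt : (mdeg (mon_act g^-1 u) < e.+1)%N by rewrite mdeg_mon_act.
have : BMultinom deg_lt \in std_mon I le e by apply/std_monP; rewrite /= mdeg_mon_act.
by rewrite -std_act inE => /std_monP [_]; rewrite /= mon_actVK.
Qed.

End InitialIdealAction.

End Polynomials.

Theorem mainTheorem10 (n : nat) (k : fieldType) (G : {group 'S_n})
  (I : {mpoly k[n]} -> Prop) (le : rel 'X_{1..n}) (d : nat) :
  homogeneous_ideal I ->
  monomial_order le ->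
  acts_monomially_upto G I d ->
  generated_in_degrees_le (initial_ideal le I) d ->
  forall g, g \in G ->
    forall f : {mpoly k[n]},
      (exists f0, initial_ideal le I f0 /\ f = var_perm_act g f0) <->
      initial_ideal (order_twist le (invg g)) I f.
Proof.
move=> hom mo acts gen g gG f; split.
  by case=> f0 [in_f0 ->]; apply: (initial_ideal_act hom mo acts gen gG).
move=> in_f; exists (var_perm_act g^-1 f); split; last by rewrite var_perm_actVK.
apply: ideal_gen_act in_f; first exact: ideal_gen_ideal.
move=> _ [f' [m [If' _ lead_m ->]]]; rewrite var_perm_actX; apply: lead_mon_initial.
by apply: (lead_mon_actV hom mo acts gen gG); exists f'.
Qed.
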